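(* In the standing setup, assume in addition that $A$ is generic (three pairwise distinct double eigenvalues) and that $\det f_0'(x)$ is not identically zero. Then for all $x\in\mathbb R^6$, $$(f_0'(x))^2=p_0(x)I+\sum_{i=1}^3 q_i(x)B_i^{\rm T},$$ where $p_0(x)=\tfrac18\operatorname{tr}(f_0'(x))^2$ and $q_i(x)=\tfrac18\operatorname{tr}\big(B_i^{\rm T}(f_0'(x))^2\big)=\tfrac18\operatorname{tr}\big(f_0'(x)g_i'(x)\big)$, with $g_i=B_i^{\rm T}f_0$.
   Context: Standing setup: $J=\begin{pmatrix}0&I_3\\-I_3&0\end{pmatrix}$ ($6\times6$). $A$ is a fixed real $6\times 6$ skew-Hamiltonian matrix ($A^{\rm T}J=JA$). $H_0$ is a homogeneous cubic polynomial on $\mathbb R^6$ with $A\nabla^2H_0(x)=\nabla^2H_0(x)A^{\rm T}$ for all $x$ ($\nabla^2$ = Hesse matrix), $H_1,H_2$ homogeneous cubic polynomials with $\nabla H_1=A\nabla H_0$, $\nabla H_2=A\nabla H_1$, $f_i=J\nabla H_i$, primes denote Jacobi matrices. Genericity: the characteristic polynomial of $A$ (a square of a cubic) has three pairwise distinct roots $\lambda_1,\lambda_2,\lambda_3$, each a double eigenvalue. $B_i=\alpha_iI+\beta_iA+\gamma_iA^2$ ($i=1,2,3$), where $\alpha_i+\beta_i\lambda+\gamma_i\lambda^2$ is the unique polynomial of degree $\le 2$ equal to $-1$ at $\lambda_i$ and to $1$ at the other two eigenvalues; then $B_i^2=I$ and $B_1+B_2+B_3=I$. *)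

From HB Require Import structures.
From mathcomp Require Import all_boot all_order all_algebra.
Set Implicit Arguments. Unset Strict Implicit. Unset Printing Implicit Defensive.
Import Order.TTheory GRing.Theory Num.Theory.
Local Open Scope ring_scope.

(* The 6x6 symplectic matrix J = [[0, I_3], [-I_3, 0]]. *)
Definition Jmx (C : ringType) : 'M[C]_6 :=
  \matrix_(i < 6, j < 6)
    if (i < 3)%N && (j == i + 3 :> nat) then 1
    else if (3 <= i)%N && (i == j + 3 :> nat) then -1 else 0.

(* A homogeneous cubic polynomial on C^6 is given by a coefficient tensor c:
   H(x) = sum_{i,j,k} c i j k * x_i x_j x_k  (every homogeneous cubic has
   such a representation).  x is a column vector. *)
Definition cubic (C : ringType) (c : 'I_6 -> 'I_6 -> 'I_6 -> C) (x : 'cV[C]_6) : C :=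
  \sum_(i < 6) \sum_(j < 6) \sum_(k < 6) c i j k * x i 0 * x j 0 * x k 0.

Definition cubic_grad (C : ringType) (c : 'I_6 -> 'I_6 -> 'I_6 -> C) (x : 'cV[C]_6)
  : 'cV[C]_6 :=
  \col_(m < 6) \sum_(j < 6) \sum_(k < 6)
     (c m j k + c j m k + c j k m) * x j 0 * x k 0.

Definition cubic_hess (C : ringType) (c : 'I_6 -> 'I_6 -> 'I_6 -> C) (x : 'cV[C]_6)
  : 'M[C]_6 :=
  \matrix_(m < 6, n < 6) \sum_(k < 6)
     (c m n k + c m k n + c n m k + c k m n + c n k m + c k n m) * x k 0.

(* Jacobi matrix of f_0 = J grad H_0 : f_0'(x) = J * Hess H_0 (x). *)
Definition f0_jac (C : ringType) (c : 'I_6 -> 'I_6 -> 'I_6 -> C) (x : 'cV[C]_6)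
  : 'M[C]_6 := Jmx C *m cubic_hess c x.

From HB Require Import structures.
From mathcomp Require Import all_boot all_order all_algebra.
From mathcomp Require Import ring zify.
Import Order.TTheory GRing.Theory Num.Theory.
Set Implicit Arguments.
Unset Strict Implicit.
Unset Printing Implicit Defensive.
Local Open Scope ring_scope.

(* With T := A^T and F := f_0'(x) = J S, S the symmetric Hesse matrix, the
   hypotheses give T J = J T^T, F T = T F and F^2 J = J (F^2)^T.  The generalized
   eigenspaces G_k = ker (T - lam_k)^2 are pairwise J-orthogonal and span the
   space, so the skew form J is nondegenerate on each of them: each G_k has even
   positive dimension, i.e. dimension 2.  On a 2-dimensional symplectic space an
   operator X with X J = J X^T is a scalar, so T and F^2 act on G_k as lam_k and
   some c_k, while B_i^T = P_i(T) acts as P_i(lam_k) = -1 or 1.  Both sides of the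
   identity are then scalars on each G_k, and the traces give
   p_0 = (c_1 + c_2 + c_3) / 4 and q_i = (c_1 + c_2 + c_3 - 2 c_i) / 4, which fit. *)

Section HornerMx.

Variables (R : comNzRingType) (n : nat).
Implicit Types (T J : 'M[R]_n.+1) (p : {poly R}).

Lemma char_poly_trmx (A : 'M[R]_n) : char_poly A^T = char_poly A.
Proof.
rewrite /char_poly -det_tr; congr (\det _); apply/matrixP => i j.
by rewrite !mxE; case: eqVneq => [->|]; rewrite ?eqxx // eq_sym => /negbTE ->.
Qed.

Lemma horner_mx_trmx T p : horner_mx T^T p = (horner_mx T p)^T.
Proof.
elim/poly_ind: p => [|p c IH]; first by rewrite !rmorph0 trmx0.
rewrite !rmorphD !rmorphM /= !horner_mx_X !horner_mx_C IH linearD /= tr_scalar_mx.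
congr (_ + _); rewrite -!mulmxE -trmx_mul; congr (_^T).
exact: comm_mx_horner (comm_mx_refl T).
Qed.

Lemma horner_mx_intertwine T J p :
  T *m J = J *m T^T -> horner_mx T p *m J = J *m (horner_mx T p)^T.
Proof.
move=> TJ; elim/poly_ind: p => [|p c IH].
  by rewrite !rmorph0 trmx0 mul0mx mulmx0.
rewrite !rmorphD !rmorphM /= !horner_mx_X !horner_mx_C linearD /= tr_scalar_mx.
rewrite mulmxDl mulmxDr mul_scalar_mx mul_mx_scalar; congr (_ + _).
rewrite -mulmxE -mulmxA TJ mulmxA IH -mulmxA -trmx_mul.
by rewrite (comm_mx_horner p (comm_mx_refl T)).
Qed.

Lemma mulmx_horner_eigen m (V : 'M[R]_(m, n.+1)) T a p :
  V *m T = a *: V -> V *m horner_mx T p = p.[a] *: V.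
Proof.
move=> VT; elim/poly_ind: p => [|p c IH].
  by rewrite !rmorph0 mulmx0 horner0 scale0r.
rewrite !rmorphD !rmorphM /= !horner_mx_X !horner_mx_C mulmxDr -mulmxE mulmxA IH.
by rewrite -scalemxAl VT scalerA mul_mx_scalar hornerD hornerMX hornerC scalerDl.
Qed.

End HornerMx.

Section Kernels.

Variables (K : fieldType) (n : nat).

(* Bezout [u p + v q = 1] gives [U = U v(T) q(T)] on [U := ker p(T)], and
   [q(T) J = J q(T)^T] carries [q(T)] over to [ker q(T)], where it vanishes. *)
Lemma kermxpoly_coprime_orthogonal (T J : 'M[K]_n.+1) p q :
  coprimep p q -> T *m J = J *m T^T ->
  kermxpoly T p *m J *m (kermxpoly T q)^T = 0.
Proof.
move=> /Bezout_eq1_coprimepP [[u v]] /= uv1 TJ.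
have Up : kermxpoly T p *m horner_mx T p = 0 by apply/sub_kermxP.
have Wq : kermxpoly T q *m horner_mx T q = 0 by apply/sub_kermxP.
move: (kermxpoly T p) (kermxpoly T q) Up Wq => U W Up Wq.
have UE : U = U *m horner_mx T v *m horner_mx T q.
  have := congr1 (fun r => U *m horner_mx T r) uv1.
  rewrite [u * p]mulrC rmorph1 mulmx1 rmorphD /= !rmorphM /= mulmxDr -!mulmxE.
  by rewrite !mulmxA Up mul0mx add0r.
rewrite UE -!mulmxA (mulmxA (horner_mx T q)) (horner_mx_intertwine q TJ).
by rewrite -!mulmxA -trmx_mul Wq trmx0 !mulmx0.
Qed.

Lemma mxtrace_col_mx3_scalar n0 n1 n2 (V0 : 'M[K]_(n0, n0 + (n1 + n2)))
    (V1 : 'M_(n1, n0 + (n1 + n2))) (V2 : 'M_(n2, n0 + (n1 + n2))) X a0 a1 a2 :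
  (1%:M <= V0 + (V1 + V2))%MS ->
  V0 *m X = a0 *: V0 -> V1 *m X = a1 *: V1 -> V2 *m X = a2 *: V2 ->
  \tr X = a0 *+ n0 + a1 *+ n1 + a2 *+ n2.
Proof.
move=> full V0X V1X V2X; set E := col_mx V0 (col_mx V1 V2).
have Eu : E \in unitmx.
  rewrite -row_full_unit -sub1mx -addsmxE; apply: submx_trans full _.
  by apply: addsmxS => //; rewrite addsmxE.
pose D : 'M_(n0 + (n1 + n2)) := block_mx a0%:M 0 0 (block_mx a1%:M 0 0 a2%:M).
have EX : E *m X = D *m E.
  by rewrite /E /D !(mul_col_mx, mul_row_col, mul0mx, addr0, add0r, mul_scalar_mx)
    V0X V1X V2X.
rewrite -[X](mulKmx Eu) EX mxtrace_mulC -mulmxA mulmxV // mulmx1.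
by rewrite /D !mxtrace_block !mxtrace_scalar addrA.
Qed.

Lemma sumsmx1_mulmx_inj (I : finType) (W : I -> 'M[K]_n) m (X Y : 'M[K]_(n, m)) :
  (\sum_i W i :=: 1%:M)%MS -> (forall i, W i *m X = W i *m Y) -> X = Y.
Proof.
move=> W1 WXY; rewrite -[X]mul1mx -[Y]mul1mx.
have /sub_sumsmxP [w ->] : (1%:M <= \sum_i W i)%MS by rewrite W1.
by rewrite !mulmx_suml; apply: eq_bigr => i _; rewrite -!mulmxA WXY.
Qed.

End Kernels.

Section SkewForms.

Variable C : numFieldType.

Lemma skew_unitmx_even n (O : 'M[C]_n) : O \in unitmx -> O^T = - O -> ~~ odd n.
Proof.
move=> Ou Oskew; apply/negP => n_odd.
have : - \det O == \det O.
  by rewrite -{2}det_tr Oskew -scaleN1r detZ -signr_odd n_odd expr1 mulN1r.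
by rewrite eqNr => /eqP detO0; move: Ou; rewrite unitmxE detO0 unitr0.
Qed.

Lemma trmx_gram m n (J : 'M[C]_n) (V : 'M[C]_(m, n)) :
  J^T = - J -> (V *m J *m V^T)^T = - (V *m J *m V^T).
Proof. by move=> Jskew; rewrite !trmx_mul trmxK Jskew mulNmx mulmxN mulmxA. Qed.

(* For [O = [[0, w], [-w, 0]]], [R O = O R^T] reads [R = adj R = \tr R - R]. *)
Lemma skew2_intertwine_scalar (O R : 'M[C]_2) :
  O \in unitmx -> O^T = - O -> R *m O = O *m R^T -> R = (R ord0 ord0)%:M.
Proof.
move=> Ou Oskew ROR; pose i1 : 'I_2 := lift ord0 ord0.
have ord2P (i : 'I_2) : i = ord0 \/ i = i1.
  by case: (unliftP ord0 i) => [j ->|->]; [right; rewrite [j]ord1 | left].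
have Oanti i j : O j i = - O i j.
  by have := congr1 (fun M : 'M_2 => M i j) Oskew; rewrite !mxE.
have Odiag i : O i i = 0 by apply/eqP; rewrite -eqNr -Oanti.
have O10 : O i1 ord0 = - O ord0 i1 := Oanti ord0 i1.
set w := O ord0 i1 in O10.
have w_neq0 : w != 0.
  apply: contraTneq Ou => w0; rewrite unitmxE (_ : O = 0) ?det0 ?unitr0 //.
  apply/matrixP => i j; rewrite mxE.
  by case: (ord2P i) => ->; case: (ord2P j) => ->; rewrite ?Odiag ?O10 -/w ?w0 ?oppr0.
have E i j : \sum_k R i k * O k j = \sum_k O i k * R j k.
  have := congr1 (fun M : 'M_2 => M i j) ROR.
  by rewrite !mxE; under [RHS]eq_bigr do rewrite mxE.
have := E ord0 ord0; have := E i1 i1; have := E ord0 i1.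
rewrite !big_ord_recl !big_ord0 !Odiag O10 -/w -/i1 !(mulr0, mul0r, addr0, add0r).
move=> E01 E11 E00.
have R01 : R ord0 i1 = 0.
  have : - (R ord0 i1 * w) == R ord0 i1 * w by rewrite -mulrN E00 mulrC.
  by rewrite eqNr mulf_eq0 (negbTE w_neq0) orbF => /eqP.
have R10 : R i1 ord0 = 0.
  have : - (R i1 ord0 * w) == R i1 ord0 * w by rewrite {2}E11 mulNr mulrC.
  by rewrite eqNr mulf_eq0 (negbTE w_neq0) orbF => /eqP.
have R11 : R i1 i1 = R ord0 ord0 by apply: (mulIf w_neq0); rewrite E01 mulrC.
apply/matrixP => i j; rewrite mxE.
by case: (ord2P i) => ->; case: (ord2P j) => ->;
  rewrite /= ?R01 ?R10 ?R11 ?mulr1n ?mulr0n.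
Qed.

Lemma gram_intertwine_scalar n (J X : 'M[C]_n) (V : 'M[C]_(2, n)) :
  J^T = - J -> X *m J = J *m X^T -> (V *m X <= V)%MS -> V *m J *m V^T \in unitmx ->
  exists a, V *m X = a *: V.
Proof.
move=> Jskew XJ /submxP [S VX] Ou.
have SO : S *m (V *m J *m V^T) = V *m J *m V^T *m S^T.
  by rewrite !mulmxA -VX -(mulmxA V X J) XJ -!mulmxA -trmx_mul VX trmx_mul !mulmxA.
exists (S ord0 ord0).
by rewrite VX {1}(skew2_intertwine_scalar Ou (trmx_gram V Jskew) SO) mul_scalar_mx.
Qed.

End SkewForms.

Lemma sign3_identity (C : numFieldType) (s : 'I_3 -> 'I_3 -> C) (c : 'I_3 -> C) k :
  (forall i j, s i j = if i == j then -1 else 1) ->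
  c k = 8^-1 * ((\sum_j c j) *+ 2)
        + \sum_i 8^-1 * ((\sum_j s i j * c j) *+ 2) * s i k.
Proof.
move=> sE; rewrite !big_ord_recl !big_ord0 !sE.
case: (unliftP ord0 k) => [k' ->|->] /=; last by field.
by case: (unliftP ord0 k') => [k'' ->|->] /=; rewrite ?[k'']ord1 /=; field.
Qed.

Section Spectral.

Variables (C : numFieldType) (J T : 'M[C]_6) (lam : 'I_3 -> C).
Hypotheses (Jskew : J^T = - J) (Junit : J \in unitmx) (TJ : T *m J = J *m T^T).
Hypotheses (lam_inj : injective lam)
  (charT : char_poly T = \prod_(k < 3) ('X - (lam k)%:P) ^+ 2).

Local Notation G k := (kermxpoly T (('X - (lam k)%:P) ^+ 2)).

Lemma coprimep_factors :
  {in predT &, forall i j : 'I_3, j != i ->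
    coprimep (('X - (lam i)%:P) ^+ 2) (('X - (lam j)%:P) ^+ 2)}.
Proof.
move=> i j _ _ ji.
by rewrite coprimep_expr ?coprimep_expl // coprimep_XsubC root_XsubC (inj_eq lam_inj).
Qed.

Lemma sumsmx_G : (\sum_k G k :=: 1%:M)%MS.
Proof.
apply: eqmx_trans (eqmx_sym (kermxpoly_prod T coprimep_factors)) _.
apply: kermxpoly_min; apply: mxminpoly_min.
by rewrite (_ : \prod_(k | predT k) _ = char_poly T) ?Cayley_Hamilton // charT.
Qed.

Lemma mxdirect_G : mxdirect (\sum_k G k).
Proof. exact: mxdirect_sum_kermx coprimep_factors. Qed.

Lemma G_orthogonal j k : j != k -> G j *m J *m (G k)^T = 0.
Proof.
move=> jk; apply: kermxpoly_coprime_orthogonal TJ.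
by apply: coprimep_factors; rewrite // eq_sym.
Qed.

Lemma G_inj m (X Y : 'M_(6, m)) : (forall k, G k *m X = G k *m Y) -> X = Y.
Proof. exact: sumsmx1_mulmx_inj sumsmx_G. Qed.

(* A row [u] of [G k] that is [J]-orthogonal to [G k] is [J]-orthogonal to
   every [G j], hence to the whole space. *)
Lemma G_gram_unitmx k m (V : 'M_(m, 6)) :
  (V :=: G k)%MS -> row_free V -> V *m J *m V^T \in unitmx.
Proof.
move=> VG Vfree; rewrite -row_free_unit; apply: inj_row_free => y yO.
rewrite !mulmxA in yO; pose u := y *m V.
have uJG j : G j *m (u *m J)^T = 0.
  rewrite -[LHS]trmxK trmx_mul trmxK; apply/eqP; rewrite trmx_eq0; apply/eqP.
  case: (eqVneq j k) => [->|jk].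
    have /submxP [Z ->] : (G k <= V)%MS by rewrite VG.
    by rewrite trmx_mul !mulmxA /u yO mul0mx.
  have /submxP [Z ->] : (u <= G k)%MS by rewrite -VG submxMl.
  by rewrite -!(mulmxA Z) G_orthogonal 1?eq_sym // mulmx0.
have uJ0 : (u *m J)^T = 0 by apply: G_inj => j; rewrite uJG mulmx0.
have u0 : u = 0 by rewrite -(mulmxK Junit u) -[u *m J]trmxK uJ0 trmx0 !mul0mx.
by apply: (row_free_inj Vfree); rewrite mul0mx.
Qed.

Lemma rank_G k : \rank (G k) = 2.
Proof.
have rank_even j : ~~ odd (\rank (G j)).
  apply: skew_unitmx_even (trmx_gram _ Jskew).
  exact: G_gram_unitmx (eq_row_base _) (row_base_free _).
have rank_pos j : (0 < \rank (G j))%N.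
  have ev : eigenvalue T (lam j).
    rewrite eigenvalue_root_char charT /root horner_prod (bigD1 j) //=.
    by rewrite !hornerE subrr expr0n mul0r.
  have /eigenspaceP ET := submx_refl (eigenspace T (lam j)).
  have EG : (eigenspace T (lam j) <= G j)%MS.
    apply/sub_kermxP.
    by rewrite (mulmx_horner_eigen _ ET) !hornerE subrr expr0n scale0r.
  by apply: leq_trans (mxrankS EG); rewrite lt0n mxrank_eq0.
have ge2 j : (2 <= \rank (G j))%N.
  by move: (rank_even j) (rank_pos j); case: (\rank (G j)) => [|[|r]].
have : (\sum_j \rank (G j) = 6)%N.
  by move/mxdirectP: mxdirect_G => /= <-; rewrite sumsmx_G mxrank1.
rewrite (bigD1 k) //=.
have : (\sum_(j | j != k) 2 <= \sum_(j | j != k) \rank (G j))%N 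
  by apply: leq_sum => j _; apply: ge2.
rewrite sum_nat_const cardC1 card_ord /=.
by move: (ge2 k); lia.
Qed.

Lemma G_basis k : exists V : 'M_(2, 6), (V :=: G k)%MS.
Proof.
by move: (row_base (G k)) (eq_row_base (G k)); rewrite rank_G => V VG; exists V.
Qed.

Lemma G_scalar X :
  comm_mx T X -> X *m J = J *m X^T -> forall k, exists a, G k *m X = a *: G k.
Proof.
move=> TX XJ k; have [V VG] := G_basis k.
have Vfree : row_free V by rewrite /row_free VG rank_G.
have VX : (V *m X <= V)%MS.
  by rewrite (eqmxMr X VG) VG; exact: comm_mx_stable_kermxpoly.
have [a VXa] := gram_intertwine_scalar Jskew XJ VX (G_gram_unitmx VG Vfree).
exists a; have /submxP [Z ->] : (G k <= V)%MS by rewrite VG.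
by rewrite -mulmxA VXa scalemxAr.
Qed.

Lemma G_eigen k : G k *m T = lam k *: G k.
Proof.
have [a GTa] := G_scalar (comm_mx_refl T) TJ k.
have : G k *m horner_mx T (('X - (lam k)%:P) ^+ 2) = 0 by apply/sub_kermxP.
rewrite (mulmx_horner_eigen _ GTa) !hornerE => /eqP.
rewrite scaler_eq0 => /orP [|/eqP G0]; last by move: (rank_G k); rewrite G0 mxrank0.
by rewrite sqrf_eq0 subr_eq0 GTa => /eqP ->.
Qed.

Lemma mxtrace_G_scalar X (a : 'I_3 -> C) :
  (forall k, G k *m X = a k *: G k) -> \tr X = (\sum_k a k) *+ 2.
Proof.
move=> GX; have /fin_all_exists [V VG] := G_basis.
have VX k : V k *m X = a k *: V k.
  have /submxP [Z ->] : (V k <= G k)%MS by rewrite VG.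
  by rewrite -(mulmxA Z) GX -scalemxAr.
rewrite (mxtrace_col_mx3_scalar (n1 := 2) (n2 := 2) _ (VX ord0)
          (VX (lift ord0 ord0)) (VX (lift ord0 (lift ord0 ord0)))).
  by rewrite !big_ord_recl big_ord0 addr0 !mulrnDl !mulr2n !addrA.
have : (1%:M <= \sum_k G k)%MS by rewrite sumsmx_G.
rewrite !big_ord_recl big_ord0 => /submx_trans; apply.
by apply: addsmxS; last apply: addsmxS; rewrite ?addsmx_sub ?sub0mx ?andbT VG.
Qed.

Lemma intertwining_decomposition (P : 'I_3 -> {poly C}) Y :
  (forall i k, (P i).[lam k] = if i == k then -1 else 1) ->
  comm_mx T Y -> Y *m J = J *m Y^T ->
  Y = (8^-1 * \tr Y) *: 1%:M
      + \sum_i (8^-1 * \tr (horner_mx T (P i) *m Y)) *: horner_mx T (P i).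
Proof.
move=> Pval TY YJ; have /fin_all_exists [c GY] := G_scalar TY YJ.
have GP i k : G k *m horner_mx T (P i) = (P i).[lam k] *: G k.
  exact: mulmx_horner_eigen (G_eigen k).
have trPY i : \tr (horner_mx T (P i) *m Y) = (\sum_k (P i).[lam k] * c k) *+ 2.
  by apply: mxtrace_G_scalar => k; rewrite mulmxA GP -scalemxAl GY scalerA.
apply: G_inj => k; rewrite mulmxDr mulmx_sumr -scalemxAr mulmx1 GY.
under eq_bigr => i _ do rewrite -scalemxAr GP scalerA.
rewrite -scaler_suml -scalerDl (mxtrace_G_scalar GY); congr (_ *: _).
rewrite {1}(@sign3_identity _ _ c k Pval); congr (_ + _).
by apply: eq_bigr => i _; rewrite trPY.
Qed.

End Spectral.

Section Hamiltonian.

Variables (R : comNzRingType) (n : nat).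
Implicit Types J S T : 'M[R]_n.

Lemma hamiltonian_sqr_intertwine J S :
  J^T = - J -> S^T = S -> J *m S *m (J *m S) *m J = J *m (J *m S *m (J *m S))^T.
Proof.
move=> Jskew Ssym; set F := J *m S.
have FJ : F *m J = - (J *m F^T) by rewrite /F trmx_mul Ssym Jskew !mulmxN opprK mulmxA.
by rewrite -mulmxA FJ mulmxN mulmxA FJ mulNmx opprK -mulmxA -trmx_mul.
Qed.

Lemma comm_mx_hamiltonian J S T :
  T *m J = J *m T^T -> S *m T = T^T *m S -> comm_mx T (J *m S).
Proof. by move=> TJ ST; rewrite /comm_mx mulmxA TJ -!mulmxA ST. Qed.

End Hamiltonian.

Lemma trmx_Jmx (R : nzRingType) : (Jmx R)^T = - Jmx R.
Proof.
apply/matrixP => i j; rewrite !mxE.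
by case: i => [[|[|[|[|[|[|//]]]]]] ?]; case: j => [[|[|[|[|[|[|//]]]]]] ?];
  rewrite /= ?oppr0 ?opprK.
Qed.

Lemma Jmx_unitmx (R : comUnitRingType) : Jmx R \in unitmx.
Proof.
have JJ : Jmx R *m Jmx R = - 1%:M.
  apply/matrixP => i j; rewrite !mxE !big_ord_recl big_ord0 !mxE.
  by case: i => [[|[|[|[|[|[|//]]]]]] ?]; case: j => [[|[|[|[|[|[|//]]]]]] ?];
    rewrite /= ?(mul0r, mulr0, add0r, addr0, mulr1, mul1r, mulN1r, oppr0, opprK).
by case: (@mulmx1_unit _ _ (Jmx R) (- Jmx R)); rewrite ?mulmxN ?JJ ?opprK.
Qed.

Lemma trmx_cubic_hess (R : comNzRingType) c (x : 'cV[R]_6) :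
  (cubic_hess c x)^T = cubic_hess c x.
Proof.
by apply/matrixP => i j; rewrite !mxE; apply: eq_bigr => k _; congr (_ * _); ring.
Qed.

Theorem mainTheorem7
  (C : numClosedFieldType)
  (A : 'M[C]_6) (c : 'I_6 -> 'I_6 -> 'I_6 -> C)
  (lam : 'I_3 -> C) (P : 'I_3 -> {poly C})
  (* A and H_0 are real *)
  (hAreal : forall i j, A i j \is Num.real)
  (hcreal : forall i j k, c i j k \is Num.real)
  (* A is skew-Hamiltonian *)
  (hskew : A^T *m Jmx C = Jmx C *m A)
  (* commutation condition on the Hesse matrix of H_0 *)
  (hcomm : forall x : 'cV[C]_6, (forall i, x i 0 \is Num.real) ->
             A *m cubic_hess c x = cubic_hess c x *m A^T)
  (* genericity: three pairwise distinct double eigenvalues *)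
  (hlam : injective lam)
  (hchar : char_poly A = \prod_(i < 3) ('X - (lam i)%:P) ^+ 2)
  (* P i is the polynomial of degree <= 2 equal to -1 at lam i, 1 at the others *)
  (hPsize : forall i, (size (P i) <= 3)%N)
  (hPval : forall i j, (P i).[lam j] = (if i == j then -1 else 1))
  (* det f_0'(x) not identically zero on R^6 *)
  (hdet : exists x : 'cV[C]_6, (forall i, x i 0 \is Num.real) /\
            \det (f0_jac c x) != 0) :
  let B := fun i => horner_mx A (P i) in
  forall x : 'cV[C]_6, (forall i, x i 0 \is Num.real) ->
    let F := f0_jac c x in
    let p0 := 8^-1 * \tr (F *m F) in
    let q := fun i => 8^-1 * \tr ((B i)^T *m (F *m F)) in
    F *m F = p0 *: 1%:M + \sum_(i < 3) q i *: (B i)^T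
    /\ (forall i, q i = 8^-1 * \tr (F *m ((B i)^T *m F))).
Proof.
move=> B x x_real F p0 q.
split; last by move=> i; rewrite /q [in RHS]mxtrace_mulC mulmxA.
have TJ : A^T *m Jmx C = Jmx C *m A^T^T by rewrite trmxK.
have charT : char_poly A^T = \prod_(k < 3) ('X - (lam k)%:P) ^+ 2.
  by rewrite char_poly_trmx.
have TF : comm_mx A^T F.
  by apply: comm_mx_hamiltonian TJ _; rewrite trmxK (hcomm _ x_real).
have FJ := hamiltonian_sqr_intertwine (trmx_Jmx C) (trmx_cubic_hess c x).
rewrite /p0 /q; under eq_bigr => i _ do rewrite -!horner_mx_trmx.
exact: intertwining_decomposition (trmx_Jmx C) (Jmx_unitmx C) TJ hlam charT
  _ _ hPval (comm_mxM TF TF) FJ.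
Qed.
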